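(* Let $X^{(\kappa)}_N$ be a twisted affine type with associated simply laced diagram $X_N$ and diagram automorphism $\sigma$. Let $\mathcal{J}^\sigma$ be the ideal of $\mathcal{T}(X_N)$ (with spectral parameter domain $\mathbb{C}_\hbar$) generated by $\hat T^{(a)}_m(u)-\hat T^{(\sigma(a))}_m(u+\Omega)$ for all $a\in I$, $m\in\mathbb{N}$, $u\in\mathbb{C}_\hbar$. Then there is a ring isomorphism $\mathcal{T}(X_N)/\mathcal{J}^\sigma\to\mathcal{T}(X^{(\kappa)}_N)$ sending the class of $\hat T^{(a)}_m(u)$ to $T^{(a)}_m(u)$ for $a\in I_\sigma$, $m\in\mathbb{N}$, $u\in\mathbb{C}_{\kappa_a\hbar}$ (the class of $\hat T^{(a)}_m(u)$ for $a\in I_\sigma$ depends only on $u$ modulo $(2\pi\sqrt{-1}/\kappa_a\hbar)\mathbb{Z}$).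
   Context: Fix $\hbar\in\mathbb{C}\setminus2\pi\sqrt{-1}\mathbb{Q}$; $\mathbb{C}_c:=\mathbb{C}/(2\pi\sqrt{-1}/c)\mathbb{Z}$. The pairs: $A^{(2)}_{2r-1}$ ($r\ge2$): $X_N=A_{2r-1}$ (chain), $\sigma(a)=2r-a$, $\kappa=2$; $A^{(2)}_{2r}$ ($r\ge1$): $X_N=A_{2r}$, $\sigma(a)=2r+1-a$, $\kappa=2$; $D^{(2)}_{r+1}$ ($r\ge3$): $X_N=D_{r+1}$ (chain $1-\cdots-(r-1)$ with $r,r+1$ joined to $r-1$), $\sigma$ swaps $r,r+1$, $\kappa=2$; $E^{(2)}_6$: $X_N=E_6$ (chain $1-2-3-5-6$, $4$ joined to $3$), $\sigma$ swaps $1\leftrightarrow6$, $2\leftrightarrow5$, $\kappa=2$; $D^{(3)}_4$: $X_N=D_4$ ($1,3,4$ joined to $2$), $\sigma:1\mapsto3\mapsto4\mapsto1$, $\kappa=3$. $I_\sigma=\{1,\dots,r\}$ in the first three cases, $\{1,2,3,4\}$ for $E^{(2)}_6$, $\{1,2\}$ for $D^{(3)}_4$. $\kappa_a=\kappa$ if $\sigma(a)=a$, else $1$. $\Omega=2\pi\sqrt{-1}/(\kappa\hbar)$. $\mathcal{T}(X_N)$: commutative ring with generators $\hat T^{(a)}_m(u)^{\pm1}$ ($a\in I$, $m\in\mathbb{N}$, $u\in\mathbb{C}_\hbar$) and relations $\hat T^{(a)}_m(u-1)\hat T^{(a)}_m(u+1)=\hat T^{(a)}_{m-1}(u)\hat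 T^{(a)}_{m+1}(u)+\prod_{b:C_{ab}=-1}\hat T^{(b)}_m(u)$, $\hat T^{(a)}_0=1$, $C$ the Cartan matrix of $X_N$. $\mathcal{T}(X^{(\kappa)}_N)$: commutative ring with generators $T^{(a)}_m(u)^{\pm1}$ ($a\in I_\sigma$, $m\in\mathbb{N}$, $u\in\mathbb{C}_{\kappa_a\hbar}$) and relations $T^{(a)}_m(u-1)T^{(a)}_m(u+1)=T^{(a)}_{m-1}(u)T^{(a)}_{m+1}(u)+M^{(a)}_m(u)$, with $T^{(0)}_m=T^{(a)}_0=1$, where: $A^{(2)}_{2r-1}$: $M^{(a)}_m=T^{(a-1)}_m(u)T^{(a+1)}_m(u)$ ($a\le r-1$), $M^{(r)}_m=T^{(r-1)}_m(u)T^{(r-1)}_m(u+\Omega)$; $A^{(2)}_{2r}$: $M^{(a)}_m=T^{(a-1)}_m(u)T^{(a+1)}_m(u)$ ($a\le r-1$), $M^{(r)}_m=T^{(r-1)}_m(u)T^{(r)}_m(u+\Omega)$; $D^{(2)}_{r+1}$: $M^{(a)}_m=T^{(a-1)}_m(u)T^{(a+1)}_m(u)$ ($a\le r-2$), $M^{(r-1)}_m=T^{(r-2)}_m(u)T^{(r)}_m(u)T^{(r)}_m(u+\Omega)$, $M^{(r)}_m=T^{(r-1)}_m(u)$; $E^{(2)}_6$: $M^{(1)}_m=T^{(2)}_m(u)$, $M^{(2)}_m=T^{(1)}_m(u)T^{(3)}_m(u)$, $M^{(3)}_m=T^{(2)}_m(u)T^{(2)}_m(u+\Omega)T^{(4)}_m(u)$,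 $M^{(4)}_m=T^{(3)}_m(u)$; $D^{(3)}_4$: $M^{(1)}_m=T^{(2)}_m(u)$, $M^{(2)}_m=T^{(1)}_m(u)T^{(1)}_m(u-\Omega)T^{(1)}_m(u+\Omega)$. *)

From Stdlib Require Import Reals.
From HB Require Import structures.
From mathcomp Require Import all_boot all_order all_algebra.
From mathcomp Require Import complex.
From mathcomp Require Import boolp Rstruct.

Set Implicit Arguments.
Unset Strict Implicit.
Unset Printing Implicit Defensive.

Import Order.TTheory GRing.Theory Num.Theory.
Local Open Scope ring_scope.

Section Quot.
Variables (T : Type) (e : T -> T -> Prop).

Definition quot := {P : T -> Prop | exists x, P = e x}.
Definition qpi (x : T) : quot := exist _ (e x) (ex_intro _ x erefl).
Definition qrepr (q : quot) : T := proj1_sig (cid (proj2_sig q)).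

Definition equivalence_rel :=
  [/\ forall x, e x x, forall x y, e x y -> e y x &
      forall x y z, e x y -> e y z -> e x z].

Lemma qreprK (q : quot) : qpi (qrepr q) = q.
Proof.
case: q => P hP; rewrite /qrepr /qpi /=.
case: (cid hP) => x /= Px; exact: eq_exist.
Qed.

Lemma qpi_eq (x y : T) : equivalence_rel -> e x y -> qpi x = qpi y.
Proof.
case=> r s t exy; apply: eq_exist.
apply/funext => z; apply/propext; split; first by move/(t _ _ _ (s _ _ exy)).
exact: t exy.
Qed.

Lemma qpi_eq_inv (x y : T) : equivalence_rel -> qpi x = qpi y -> e x y.
Proof.
case=> r s t /(congr1 (@proj1_sig _ _)) /= exy.
by rewrite exy; apply: r.
Qed.

End Quot.

Lemma quot_ind (T : Type) (e : T -> T -> Prop) (P : quot e -> Prop) :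
  (forall x, P (qpi e x)) -> forall q, P q.
Proof. by move=> H q; rewrite -(qreprK q). Qed.

(* The free commutative ring Z[g^{+-1} : g in G] on a type of          *)
(* generators G, each generator being invertible (Laurent polynomials). *)
Section FreeRing.
Variable G : Type.

Inductive fterm :=
| fVar of G | fInv of G | fZero | fOne
| fAdd of fterm & fterm | fOpp of fterm | fMul of fterm & fterm.

Inductive fcong : fterm -> fterm -> Prop :=
| fc_refl x : fcong x x
| fc_sym x y : fcong x y -> fcong y x
| fc_trans x y z : fcong x y -> fcong y z -> fcong x z
| fc_add x x' y y' : fcong x x' -> fcong y y' -> fcong (fAdd x y) (fAdd x' y')
| fc_opp x x' : fcong x x' -> fcong (fOpp x) (fOpp x')
| fc_mul x x' y y' : fcong x x' -> fcong y y' -> fcong (fMul x y) (fMul x' y')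
| fc_addA x y z : fcong (fAdd x (fAdd y z)) (fAdd (fAdd x y) z)
| fc_addC x y : fcong (fAdd x y) (fAdd y x)
| fc_add0 x : fcong (fAdd fZero x) x
| fc_addN x : fcong (fAdd (fOpp x) x) fZero
| fc_mulA x y z : fcong (fMul x (fMul y z)) (fMul (fMul x y) z)
| fc_mulC x y : fcong (fMul x y) (fMul y x)
| fc_mul1 x : fcong (fMul fOne x) x
| fc_mulDl x y z : fcong (fMul (fAdd x y) z) (fAdd (fMul x z) (fMul y z))
| fc_inv g : fcong (fMul (fVar g) (fInv g)) fOne.

Lemma fcong_equiv : equivalence_rel fcong.
Proof. by split; [exact: fc_refl | exact: fc_sym | exact: fc_trans]. Qed.

Definition freeRing := quot fcong.
HB.instance Definition _ := gen_eqMixin freeRing.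
HB.instance Definition _ := gen_choiceMixin freeRing.

Local Notation fpi := (qpi fcong).
Local Notation frep := (qrepr (e:=fcong)).

Definition fr_zero : freeRing := fpi fZero.
Definition fr_one : freeRing := fpi fOne.
Definition fr_add (x y : freeRing) : freeRing := fpi (fAdd (frep x) (frep y)).
Definition fr_opp (x : freeRing) : freeRing := fpi (fOpp (frep x)).
Definition fr_mul (x y : freeRing) : freeRing := fpi (fMul (frep x) (frep y)).

Lemma frep_cong x : fcong (frep (fpi x)) x.
Proof. by apply: (qpi_eq_inv fcong_equiv); rewrite qreprK. Qed.

Lemma fr_addE x y : fr_add (fpi x) (fpi y) = fpi (fAdd x y).
Proof. by apply: (qpi_eq fcong_equiv); apply: fc_add; apply: frep_cong. Qed.
Lemma fr_oppE x : fr_opp (fpi x) = fpi (fOpp x).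
Proof. by apply: (qpi_eq fcong_equiv); apply: fc_opp; apply: frep_cong. Qed.
Lemma fr_mulE x y : fr_mul (fpi x) (fpi y) = fpi (fMul x y).
Proof. by apply: (qpi_eq fcong_equiv); apply: fc_mul; apply: frep_cong. Qed.

Lemma fr_addA : associative fr_add.
Proof.
elim/quot_ind=> x; elim/quot_ind=> y; elim/quot_ind=> z.
rewrite !fr_addE; apply: (qpi_eq fcong_equiv); exact: fc_addA.
Qed.
Lemma fr_addC : commutative fr_add.
Proof.
elim/quot_ind=> x; elim/quot_ind=> y.
rewrite !fr_addE; apply: (qpi_eq fcong_equiv); exact: fc_addC.
Qed.
Lemma fr_add0 : left_id fr_zero fr_add.
Proof.
elim/quot_ind=> x; rewrite /fr_zero fr_addE.
apply: (qpi_eq fcong_equiv); exact: fc_add0.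
Qed.
Lemma fr_addN : left_inverse fr_zero fr_opp fr_add.
Proof.
elim/quot_ind=> x; rewrite fr_oppE fr_addE.
apply: (qpi_eq fcong_equiv); exact: fc_addN.
Qed.

HB.instance Definition _ :=
  GRing.isZmodule.Build freeRing fr_addA fr_addC fr_add0 fr_addN.

Lemma fr_mulA : associative fr_mul.
Proof.
elim/quot_ind=> x; elim/quot_ind=> y; elim/quot_ind=> z.
rewrite !fr_mulE; apply: (qpi_eq fcong_equiv); exact: fc_mulA.
Qed.
Lemma fr_mulC : commutative fr_mul.
Proof.
elim/quot_ind=> x; elim/quot_ind=> y.
rewrite !fr_mulE; apply: (qpi_eq fcong_equiv); exact: fc_mulC.
Qed.
Lemma fr_mul1 : left_id fr_one fr_mul.
Proof.
elim/quot_ind=> x; rewrite /fr_one fr_mulE.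
apply: (qpi_eq fcong_equiv); exact: fc_mul1.
Qed.
Lemma fr_mulDl : left_distributive fr_mul fr_add.
Proof.
elim/quot_ind=> x; elim/quot_ind=> y; elim/quot_ind=> z.
rewrite !(fr_addE, fr_mulE).
apply: (qpi_eq fcong_equiv); exact: fc_mulDl.
Qed.

HB.instance Definition _ :=
  GRing.Zmodule_isComPzRing.Build freeRing fr_mulA fr_mulC fr_mul1 fr_mulDl.

Definition fgen (g : G) : freeRing := fpi (fVar g).
Definition fgen_inv (g : G) : freeRing := fpi (fInv g).

End FreeRing.

Section IdealQuotient.
Variables (R : comPzRingType) (S : R -> Prop).

Definition in_ideal_gen (x : R) : Prop :=
  exists s : seq (R * R),
    (forall p, p \in s -> S p.2) /\ x = \sum_(p <- s) p.1 * p.2.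

Definition iqrel (x y : R) : Prop := in_ideal_gen (x - y).

Lemma ideal_gen0 : in_ideal_gen 0.
Proof. by exists [::]; rewrite big_nil. Qed.

Lemma ideal_genD x y : in_ideal_gen x -> in_ideal_gen y -> in_ideal_gen (x + y).
Proof.
move=> [s [hs ->]] [t [ht ->]]; exists (s ++ t); rewrite big_cat; split=> //.
by move=> p; rewrite mem_cat => /orP[/hs|/ht].
Qed.

Lemma ideal_genM x z : in_ideal_gen x -> in_ideal_gen (z * x).
Proof.
move=> [s [hs ->]]; exists [seq (z * p.1, p.2) | p <- s]; split.
  by move=> p /mapP[q /hs qs ->].
by rewrite big_map mulr_sumr; apply: eq_bigr => p _; rewrite mulrA.
Qed.

Lemma ideal_genN x : in_ideal_gen x -> in_ideal_gen (- x).
Proof. by move=> /(ideal_genM (-1)); rewrite mulN1r. Qed.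

Lemma iqrel_equiv : equivalence_rel iqrel.
Proof.
split.
- by move=> x; rewrite /iqrel subrr; exact: ideal_gen0.
- by move=> x y /ideal_genN; rewrite /iqrel opprB.
- move=> x y z hxy hyz; have := ideal_genD hxy hyz.
  by rewrite /iqrel addrA subrK.
Qed.

Definition ringQuot := quot iqrel.
HB.instance Definition _ := gen_eqMixin ringQuot.
HB.instance Definition _ := gen_choiceMixin ringQuot.

Definition rq (x : R) : ringQuot := qpi iqrel x.
Local Notation qrep := (qrepr (e:=iqrel)).

Definition rq_zero : ringQuot := rq 0.
Definition rq_one : ringQuot := rq 1.
Definition rq_add (x y : ringQuot) : ringQuot := rq (qrep x + qrep y).
Definition rq_opp (x : ringQuot) : ringQuot := rq (- qrep x).
Definition rq_mul (x y : ringQuot) : ringQuot := rq (qrep x * qrep y).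

Lemma rq_rel x : iqrel (qrep (rq x)) x.
Proof. by apply: (qpi_eq_inv iqrel_equiv); rewrite qreprK. Qed.

Lemma rq_addE x y : rq_add (rq x) (rq y) = rq (x + y).
Proof.
apply: (qpi_eq iqrel_equiv); have := ideal_genD (rq_rel x) (rq_rel y).
by rewrite /iqrel opprD addrACA.
Qed.
Lemma rq_oppE x : rq_opp (rq x) = rq (- x).
Proof.
apply: (qpi_eq iqrel_equiv); have := ideal_genN (rq_rel x).
by rewrite /iqrel opprK opprB addrC.
Qed.
Lemma rq_mulE x y : rq_mul (rq x) (rq y) = rq (x * y).
Proof.
apply: (qpi_eq iqrel_equiv).
have := ideal_genD (ideal_genM (qrep (rq y)) (rq_rel x))
                   (ideal_genM x (rq_rel y)).
rewrite /iqrel !mulrBr [qrep (rq y) * x]mulrC [x * qrep (rq y)]mulrC.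
by rewrite addrA subrK [qrep (rq y) * _]mulrC.
Qed.

Lemma rq_addA : associative rq_add.
Proof.
by elim/quot_ind=> x; elim/quot_ind=> y; elim/quot_ind=> z;
  rewrite -!/(rq _) !rq_addE addrA.
Qed.
Lemma rq_addC : commutative rq_add.
Proof.
by elim/quot_ind=> x; elim/quot_ind=> y; rewrite -!/(rq _) !rq_addE addrC.
Qed.
Lemma rq_add0 : left_id rq_zero rq_add.
Proof. by elim/quot_ind=> x; rewrite -!/(rq _) /rq_zero rq_addE add0r. Qed.
Lemma rq_addN : left_inverse rq_zero rq_opp rq_add.
Proof.
by elim/quot_ind=> x; rewrite -!/(rq _) rq_oppE rq_addE addNr.
Qed.

HB.instance Definition _ :=
  GRing.isZmodule.Build ringQuot rq_addA rq_addC rq_add0 rq_addN.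

Lemma rq_mulA : associative rq_mul.
Proof.
by elim/quot_ind=> x; elim/quot_ind=> y; elim/quot_ind=> z;
  rewrite -!/(rq _) !rq_mulE mulrA.
Qed.
Lemma rq_mulC : commutative rq_mul.
Proof.
by elim/quot_ind=> x; elim/quot_ind=> y; rewrite -!/(rq _) !rq_mulE mulrC.
Qed.
Lemma rq_mul1 : left_id rq_one rq_mul.
Proof. by elim/quot_ind=> x; rewrite -!/(rq _) /rq_one rq_mulE mul1r. Qed.
Lemma rq_mulDl : left_distributive rq_mul rq_add.
Proof.
by elim/quot_ind=> x; elim/quot_ind=> y; elim/quot_ind=> z;
  rewrite -!/(rq _) !(rq_addE, rq_mulE) mulrDl.
Qed.

HB.instance Definition _ :=
  GRing.Zmodule_isComPzRing.Build ringQuot rq_mulA rq_mulC rq_mul1 rq_mulDl.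

End IdealQuotient.

(* A commutative ring presented by (invertible) generators G and relations
   lhs = rhs, encoded as the set rel of elements lhs - rhs of the free ring. *)
Definition presentedRing (G : Type) (rel : freeRing G -> Prop) :=
  ringQuot rel.

Unset Implicit Arguments.

Local Open Scope complex_scope.

Definition CC : Type := R[i].
Definition twopii : CC := (2 * PI)%R%:C * 'i.

Definition cmod_rel (c : CC) (u v : CC) : Prop :=
  exists k : int, u - v = k%:~R * (twopii / c).

Definition Cmod (c : CC) := quot (cmod_rel c).
Definition cproj (c : CC) (z : CC) : Cmod c := qpi (cmod_rel c) z.

Local Close Scope complex_scope.

Inductive twisted_type :=
| A2odd of nat   (* A^(2)_(2r-1), r >= 2 *)
| A2even of nat  (* A^(2)_(2r),   r >= 1 *)
| D2 of nat      (* D^(2)_(r+1),  r >= 3 *)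
| E62
| D43.

Definition tt_valid (t : twisted_type) : bool :=
  match t with
  | A2odd r => 2 <= r
  | A2even r => 1 <= r
  | D2 r => 3 <= r
  | E62 | D43 => true
  end%N.

(* the rank N of the simply laced diagram X_N; its nodes are 1, ..., N *)
Definition rankN (t : twisted_type) : nat :=
  match t with
  | A2odd r => (2 * r).-1
  | A2even r => 2 * r
  | D2 r => r.+1
  | E62 => 6
  | D43 => 4
  end.

Definition is_node (t : twisted_type) (a : nat) : bool := (1 <= a <= rankN t)%N.

(* one orientation of each edge of the Dynkin diagram X_N *)
Definition edge1 (t : twisted_type) (a b : nat) : bool :=
  match t with
  | A2odd _ | A2even _ => (1 <= a)%N && (b == a.+1) && (b <= rankN t)%N
  | D2 r => ((1 <= a <= r.-1)%N && (b == a.+1)) || ((a == r.-1) && (b == r.+1))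
  | E62 => ((a, b) \in [:: (1, 2); (2, 3); (3, 5); (5, 6); (3, 4)])%N
  | D43 => ((a, b) \in [:: (1, 2); (3, 2); (4, 2)])%N
  end.

(* C_ab = -1 in the Cartan matrix of X_N *)
Definition adj (t : twisted_type) (a b : nat) : bool := edge1 t a b || edge1 t b a.

Definition sigma (t : twisted_type) (a : nat) : nat :=
  match t with
  | A2odd r => (2 * r - a)%N
  | A2even r => ((2 * r).+1 - a)%N
  | D2 r => if a == r then r.+1 else if a == r.+1 then r else a
  | E62 => match a with 1 => 6 | 6 => 1 | 2 => 5 | 5 => 2 | _ => a end
  | D43 => match a with 1 => 3 | 3 => 4 | 4 => 1 | _ => a end
  end%N.

Definition kappa (t : twisted_type) : nat :=
  match t with D43 => 3 | _ => 2 end.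

Definition in_Isig (t : twisted_type) (a : nat) : bool :=
  match t with
  | A2odd r | A2even r | D2 r => (1 <= a <= r)%N
  | E62 => (1 <= a <= 4)%N
  | D43 => (1 <= a <= 2)%N
  end.

Definition kappa_a (t : twisted_type) (a : nat) : nat :=
  if sigma t a == a then kappa t else 1%N.

Definition Omega (t : twisted_type) (hb : CC) : CC :=
  twopii / ((kappa t)%:R * hb).

Record ugen (t : twisted_type) (hb : CC) := UGen {
  ug_a : nat; ug_m : nat;
  ug_P : is_node t ug_a && (0 < ug_m)%N;
  ug_u : Cmod hb }.

(* hatT^(a)_m(z mod (2 pi i/hbar)Z) in the free ring, with the conventions
   hatT^(a)_0 = 1 (and 1 outside the range of nodes). *)
Definition uT (t : twisted_type) (hb : CC) (a m : nat) (z : CC)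
  : freeRing (ugen t hb) :=
  match is_node t a && (0 < m)%N as b
        return is_node t a && (0 < m)%N = b -> freeRing (ugen t hb) with
  | true => fun H => fgen (UGen t hb a m H (cproj hb z))
  | false => fun _ => 1
  end erefl.

Definition urel (t : twisted_type) (hb : CC) (x : freeRing (ugen t hb)) : Prop :=
  exists (a m : nat) (z : CC), is_node t a /\ (0 < m)%N /\
    x = uT t hb a m (z - 1) * uT t hb a m (z + 1)
        - (uT t hb a m.-1 z * uT t hb a m.+1 z
           + \prod_(1 <= b < (rankN t).+1 | adj t a b) uT t hb b m z).

Definition TX (t : twisted_type) (hb : CC) := presentedRing (urel t hb).

Definition hatT (t : twisted_type) (hb : CC) (a m : nat) (z : CC) : TX t hb :=
  @rq _ (urel t hb) (uT t hb a m z).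

Definition Jsig (t : twisted_type) (hb : CC) (x : TX t hb) : Prop :=
  exists (a m : nat) (z : CC), is_node t a /\ (0 < m)%N /\
    x = hatT t hb a m z - hatT t hb (sigma t a) m (z + Omega t hb).

Definition TXquot (t : twisted_type) (hb : CC) := ringQuot (Jsig t hb).

Record tgen (t : twisted_type) (hb : CC) := TGen {
  tg_a : nat; tg_m : nat;
  tg_P : in_Isig t tg_a && (0 < tg_m)%N;
  tg_u : Cmod ((kappa_a t tg_a)%:R * hb) }.

(* T^(b)_m(z mod (2 pi i/(kappa_b hbar))Z), with T^(0)_m = T^(b)_0 = 1 *)
Definition tT (t : twisted_type) (hb : CC) (b m : nat) (z : CC)
  : freeRing (tgen t hb) :=
  match in_Isig t b && (0 < m)%N as c
        return in_Isig t b && (0 < m)%N = c -> freeRing (tgen t hb) with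
  | true => fun H => fgen (TGen t hb b m H (cproj ((kappa_a t b)%:R * hb) z))
  | false => fun _ => 1
  end erefl.

Definition Mtw (t : twisted_type) (hb : CC) (a m : nat) (z : CC)
  : freeRing (tgen t hb) :=
  let T b w := tT t hb b m w in
  let O := Omega t hb in
  match t with
  | A2odd r =>
      if (a <= r.-1)%N then T a.-1 z * T a.+1 z
      else T r.-1 z * T r.-1 (z + O)
  | A2even r =>
      if (a <= r.-1)%N then T a.-1 z * T a.+1 z
      else T r.-1 z * T r (z + O)
  | D2 r =>
      if (a <= r.-2)%N then T a.-1 z * T a.+1 z
      else if a == r.-1 then T r.-2 z * T r z * T r (z + O)
      else T r.-1 z
  | E62 =>
      match a with
      | 1 => T 2 z
      | 2 => T 1 z * T 3 z
      | 3 => T 2 z * T 2 (z + O) * T 4 z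
      | _ => T 3 z
      end
  | D43 =>
      match a with
      | 1 => T 2 z
      | _ => T 1 z * T 1 (z - O) * T 1 (z + O)
      end
  end.

Definition trel (t : twisted_type) (hb : CC) (x : freeRing (tgen t hb)) : Prop :=
  exists (a m : nat) (z : CC), in_Isig t a /\ (0 < m)%N /\
    x = tT t hb a m (z - 1) * tT t hb a m (z + 1)
        - (tT t hb a m.-1 z * tT t hb a m.+1 z + Mtw t hb a m z).

Definition TXtw (t : twisted_type) (hb : CC) := presentedRing (trel t hb).

Definition Ttw (t : twisted_type) (hb : CC) (a m : nat) (z : CC) : TXtw t hb :=
  @rq _ (trel t hb) (tT t hb a m z).

(* The isomorphism sends hatT^(a)_m(u) to T^(c)_m(u - k Omega), where c in I_sigma
   is the representative of the sigma-orbit of a and a = sigma^k(c).  Since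
   T^(c)_m has period Omega when sigma fixes c and period kappa Omega in any case,
   this assignment is compatible with J^sigma, and it maps the T-system relation
   of X_N at a onto the twisted relation at c: the neighbours of a in X_N fold
   onto the factors of M^(c)_m, shifted by multiples of Omega.  Conversely
   T^(a)_m(u) goes to the class of hatT^(a)_m(u); modulo J^sigma these classes
   are sigma-equivariant, which turns the same folding identity into the
   twisted relations.  Both composites fix the generators. *)

From Pilot Require Import Defs.
From Stdlib Require Import Reals.
From HB Require Import structures.
From mathcomp Require Import all_boot all_order all_algebra.
From mathcomp Require Import complex.
From mathcomp Require Import boolp Rstruct.
From mathcomp Require Import ring zify.
Import GRing.Theory Num.Theory.
Local Open Scope ring_scope.

Set Implicit Arguments.
Unset Strict Implicit.
Unset Printing Implicit Defensive.
Set Bullet Behavior "Strict Subproofs".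

(* [Reals] exports another [sigma]. *)
Notation sigma := Defs.sigma.

Arguments ug_a {t hb}. Arguments ug_m {t hb}. Arguments ug_P {t hb}. Arguments ug_u {t hb}.
Arguments tg_a {t hb}. Arguments tg_m {t hb}. Arguments tg_P {t hb}. Arguments tg_u {t hb}.

Lemma periodic_mulrz (V : zmodType) (T : Type) (F : V -> T) (p : V) :
  (forall w, F (w + p) = F w) -> forall w (j : int), F (w + p *~ j) = F w.
Proof.
move=> Fp; have Fn (n : nat) w : F (w + p *+ n) = F w.
  by elim: n w => [|n IH] w; rewrite ?mulr0n ?addr0 // mulrS addrA IH Fp.
move=> w [] n; first exact: Fn.
by rewrite -(Fn n.+1) NegzE mulrNz -pmulrn subrK.
Qed.

Lemma prod_filter_perm (I : eqType) (R : comPzSemiRingType) (r s : seq I)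
    (P : pred I) (G : I -> R) :
  uniq r -> uniq s -> {in r, forall i, P i = (i \in s)} ->
  {in [predD s & r], forall i, G i = 1} ->
  \prod_(i <- r | P i) G i = \prod_(i <- s) G i.
Proof.
move=> ur us Pr G1; rewrite [RHS](bigID (mem r)) /= [X in _ * X]big1_seq ?mulr1.
  rewrite -big_filter -[RHS]big_filter; apply: perm_big.
  apply: uniq_perm; rewrite ?filter_uniq // => i; rewrite !mem_filter.
  by case ir: (i \in r); rewrite ?andbF ?andbT //= (Pr _ ir).
by move=> i ni; apply: G1; rewrite inE.
Qed.

(** * Universal properties of ring quotients and free rings *)

Section RingQuotient.
Variables (R : comPzRingType) (P : R -> Prop).

Lemma rq_is_zmod_morphism : zmod_morphism (@rq R P).
Proof. by move=> x y; rewrite -rq_addE -rq_oppE. Qed.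

Lemma rq_is_monoid_morphism : monoid_morphism (@rq R P).
Proof. by split=> // x y; rewrite -rq_mulE. Qed.

HB.instance Definition _ :=
  GRing.isZmodMorphism.Build _ _ (@rq R P) rq_is_zmod_morphism.
HB.instance Definition _ :=
  GRing.isMonoidMorphism.Build _ _ (@rq R P) rq_is_monoid_morphism.

Lemma rq_ind (Q : ringQuot P -> Prop) : (forall x, Q (rq P x)) -> forall q, Q q.
Proof. exact: quot_ind. Qed.

Lemma rq_eq x y : P (x - y) -> rq P x = rq P y.
Proof.
move=> Pxy; apply: (qpi_eq (iqrel_equiv P)).
by exists [:: (1, x - y)]; rewrite big_seq1 mul1r; split=> // p; rewrite inE => /eqP ->.
Qed.

Variables (S : comPzRingType) (h : {rmorphism R -> S}).
Hypothesis h_rel : forall x, P x -> h x = 0.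

Lemma rmorph_ideal_gen x : in_ideal_gen P x -> h x = 0.
Proof.
case=> s [Ps ->]; rewrite rmorph_sum big1_seq // => p /andP[_ /Ps /h_rel hp].
by rewrite rmorphM hp mulr0.
Qed.

Let lift (q : ringQuot P) : S := h (qrepr q).

Let lift_rq x : lift (rq P x) = h x.
Proof.
apply/eqP; rewrite -subr_eq0 -rmorphB; apply/eqP/rmorph_ideal_gen.
by apply: (qpi_eq_inv (iqrel_equiv P)); rewrite qreprK.
Qed.

Let lift_is_zmod_morphism : zmod_morphism lift.
Proof. by elim/rq_ind=> x; elim/rq_ind=> y; rewrite -rmorphB !lift_rq rmorphB. Qed.

Let lift_is_monoid_morphism : monoid_morphism lift.
Proof.
split; first by rewrite -(rmorph1 (rq P)) lift_rq rmorph1.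
by elim/rq_ind=> x; elim/rq_ind=> y; rewrite -rmorphM !lift_rq rmorphM.
Qed.

Definition rq_lift : {rmorphism ringQuot P -> S} :=
  HB.pack_for {rmorphism ringQuot P -> S} lift
    (GRing.isZmodMorphism.Build _ _ lift lift_is_zmod_morphism)
    (GRing.isMonoidMorphism.Build _ _ lift lift_is_monoid_morphism).

Lemma rq_liftE x : rq_lift (rq P x) = h x.
Proof. exact: lift_rq. Qed.

End RingQuotient.

Section FreeRingLift.
Variables (G : Type) (R : comPzRingType) (phi psi : G -> R).
Hypothesis phiK : forall g, phi g * psi g = 1.

Fixpoint fterm_eval (x : fterm G) : R :=
  match x with
  | fVar g => phi g | fInv g => psi g | fZero => 0 | fOne => 1
  | fAdd x y => fterm_eval x + fterm_eval y | fOpp x => - fterm_eval x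
  | fMul x y => fterm_eval x * fterm_eval y
  end.

Lemma fterm_eval_cong x y : fcong x y -> fterm_eval x = fterm_eval y.
Proof.
elim=> {x y} /=; try congruence.
all: move=> *; by [exact: addrA | exact: addrC | exact: add0r | exact: addNr
                 | exact: mulrA | exact: mulrC | exact: mul1r | exact: mulrDl].
Qed.

Let lift (x : freeRing G) : R := fterm_eval (qrepr x).

Let liftE x : lift (qpi (@fcong G) x) = fterm_eval x.
Proof. exact/fterm_eval_cong/frep_cong. Qed.

Let lift_is_zmod_morphism : zmod_morphism lift.
Proof.
elim/quot_ind=> x; elim/quot_ind=> y.
by rewrite -[_ - _]/(fr_add _ (fr_opp _)) fr_oppE fr_addE !liftE.
Qed.

Let lift_is_monoid_morphism : monoid_morphism lift.
Proof.
split; first exact: (liftE (fOne G)).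
by elim/quot_ind=> x; elim/quot_ind=> y; rewrite -[_ * _]/(fr_mul _ _) fr_mulE !liftE.
Qed.

Definition free_lift : {rmorphism freeRing G -> R} :=
  HB.pack_for {rmorphism freeRing G -> R} lift
    (GRing.isZmodMorphism.Build _ _ lift lift_is_zmod_morphism)
    (GRing.isMonoidMorphism.Build _ _ lift lift_is_monoid_morphism).

Lemma free_lift_gen g : free_lift (fgen g) = phi g.
Proof. exact: liftE. Qed.

End FreeRingLift.

Lemma fgenV (G : Type) (g : G) : fgen g * fgen_inv g = 1.
Proof. by rewrite -[_ * _]/(fr_mul _ _) fr_mulE; apply/qpi_eq/fc_inv/fcong_equiv. Qed.

Lemma free_rmorph_eq (G : Type) (R : comPzRingType) (h1 h2 : {rmorphism freeRing G -> R}) :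
  (forall g, h1 (fgen g) = h2 (fgen g)) -> h1 =1 h2.
Proof.
move=> eq_gen; elim/quot_ind; elim=> [g|g|||x IHx y IHy|x IHx|x IHx y IHy].
- exact: eq_gen.
- have inv (h : {rmorphism freeRing G -> R}) : h (fgen g) * h (fgen_inv g) = 1.
    by rewrite -rmorphM fgenV rmorph1.
  rewrite -[qpi _ _]/(fgen_inv g) -[LHS]mul1r -(inv h2) -eq_gen.
  by rewrite mulrAC inv mul1r.
- by rewrite -[qpi _ _]/(0 : freeRing G) !rmorph0.
- by rewrite -[qpi _ _]/(1 : freeRing G) !rmorph1.
- by rewrite -fr_addE -[fr_add _ _]/(_ + _ : freeRing G) !rmorphD IHx IHy.
- by rewrite -fr_oppE -[fr_opp _]/(- _ : freeRing G) !rmorphN IHx.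
- by rewrite -fr_mulE -[fr_mul _ _]/(_ * _ : freeRing G) !rmorphM IHx IHy.
Qed.

(** * Generators and spectral parameters *)

Section DependentIf.
Variables (X : bool) (T : Type) (F : X = true -> T) (d : T).

Lemma dep_ifT (P : X) :
  (if X as c return X = c -> T then F else fun=> d) (erefl X) = F P.
Proof.
suff gen c (e : X = c) : (if c as c' return X = c' -> T then F else fun=> d) e = F P.
  exact: gen.
by case: c e => e; [rewrite (bool_irrelevance e P) | have := P; rewrite e].
Qed.

Lemma dep_ifF : ~~ X ->
  (if X as c return X = c -> T then F else fun=> d) (erefl X) = d.
Proof.
move=> nX; suff gen c (e : X = c) : (if c as c' return X = c' -> T then F else fun=> d) e = d.
  exact: gen.
by case: c e => // e; move: nX; rewrite e.
Qed.

End DependentIf.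

Lemma uT_gen t hb a m z (P : is_node t a && (0 < m)%N) :
  uT t hb a m z = fgen (UGen t hb a m P (cproj hb z)).
Proof. exact: dep_ifT. Qed.

Lemma uT_out t hb a m z : ~~ (is_node t a && (0 < m)%N) -> uT t hb a m z = 1.
Proof. exact: dep_ifF. Qed.

Lemma tT_gen t hb b m z (P : in_Isig t b && (0 < m)%N) :
  tT t hb b m z = fgen (TGen t hb b m P (cproj ((kappa_a t b)%:R * hb) z)).
Proof. exact: dep_ifT. Qed.

Lemma tT_out t hb b m z : ~~ (in_Isig t b && (0 < m)%N) -> tT t hb b m z = 1.
Proof. exact: dep_ifF. Qed.

Lemma cmod_rel_equiv c : Defs.equivalence_rel (cmod_rel c).
Proof.
split=> [x|x y [k e]|x y z [k e] [l e']]; first by exists 0; rewrite subrr mul0r.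
  by exists (- k); rewrite -opprB e mulrNz mulNr.
by exists (k + l); rewrite -[x - z](subrKA y) e e' mulrzDr mulrDl addrC.
Qed.

Lemma cproj_eq c z z' (j : int) :
  z - z' = j%:~R * (twopii / c) -> cproj c z = cproj c z'.
Proof. by move=> e; apply: (qpi_eq (cmod_rel_equiv c)); exists j. Qed.

Lemma cproj_qrepr c (u : Cmod c) : cproj c (qrepr u) = u.
Proof. exact: qreprK. Qed.

Lemma qrepr_cproj c z : exists j : int, qrepr (cproj c z) = z + j%:~R * (twopii / c).
Proof.
have [j e] : cmod_rel c (qrepr (cproj c z)) z.
  by apply: (qpi_eq_inv (cmod_rel_equiv c)); rewrite qreprK.
by exists j; rewrite -e addrC subrK.
Qed.

(** * Folding the Dynkin diagram *)

(* [a = sigma^(fold_shift a) (fold_node a)] with [fold_node a] in [I_sigma]. *)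
Definition fold_node (t : twisted_type) (a : nat) : nat :=
  match t with
  | A2odd r => if a <= r then a else 2 * r - a
  | A2even r => if a <= r then a else (2 * r).+1 - a
  | D2 r => if a == r.+1 then r else a
  | E62 => match a with 6 => 1 | 5 => 2 | _ => a end
  | D43 => match a with 3 | 4 => 1 | _ => a end
  end%N.

Definition fold_shift (t : twisted_type) (a : nat) : nat :=
  match t with
  | A2odd r | A2even r => if a <= r then 0 else 1
  | D2 r => if a == r.+1 then 1 else 0
  | E62 => match a with 6 | 5 => 1 | _ => 0 end
  | D43 => match a with 3 => 1 | 4 => 2 | _ => 0 end
  end%N.

(* Along the A chains this list also contains the non-nodes [0] and [N + 1]. *)
Definition neighbours (t : twisted_type) (a : nat) : seq nat :=
  match t with
  | A2odd _ | A2even _ => [:: a.-1; a.+1]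
  | D2 r => if a <= r.-2 then [:: a.-1; a.+1]
            else if a == r.-1 then [:: r.-2; r; r.+1] else [:: r.-1]
  | E62 => match a with 1 => [:: 2] | 2 => [:: 1; 3] | 3 => [:: 2; 5; 4]
           | 4 => [:: 3] | 5 => [:: 3; 6] | 6 => [:: 5] | _ => [::] end
  | D43 => match a with 1 => [:: 2] | 2 => [:: 1; 3; 4] | 3 | 4 => [:: 2]
           | _ => [::] end
  end%N.

(* [Mtw] with the generators [tT b m] abstracted into [T b]. *)
Definition twisted_M (R : comPzRingType) (t : twisted_type) (O : CC)
    (T : nat -> CC -> R) (a : nat) (z : CC) : R :=
  match t with
  | A2odd r =>
      if (a <= r.-1)%N then T a.-1 z * T a.+1 z else T r.-1 z * T r.-1 (z + O)
  | A2even r =>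
      if (a <= r.-1)%N then T a.-1 z * T a.+1 z else T r.-1 z * T r (z + O)
  | D2 r =>
      if (a <= r.-2)%N then T a.-1 z * T a.+1 z
      else if a == r.-1 then T r.-2 z * T r z * T r (z + O)
      else T r.-1 z
  | E62 =>
      match a with
      | 1 => T 2%N z
      | 2 => T 1%N z * T 3%N z
      | 3 => T 2%N z * T 2%N (z + O) * T 4%N z
      | _ => T 3%N z
      end
  | D43 =>
      match a with
      | 1 => T 2%N z
      | _ => T 1%N z * T 1%N (z - O) * T 1%N (z + O)
      end
  end.

Lemma Mtw_rmorph t hb (S : comPzRingType) (h : {rmorphism freeRing (tgen t hb) -> S}) a m z :
  h (Mtw t hb a m z) = twisted_M t (Omega t hb) (fun b w => h (tT t hb b m w)) a z.
Proof.
rewrite /Mtw /twisted_M; case: t h => [r|r|r||] h /=; repeat case: ifP => _.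
all: rewrite ?rmorphM //.
all: by case: a => [|[|[|[|a]]]]; rewrite /= ?rmorphM.
Qed.

Section Combinatorics.
Variable t : twisted_type.
Hypothesis tv : tt_valid t.

Lemma Isig_node a : in_Isig t a -> is_node t a.
Proof. by rewrite /is_node; case: t tv => [r|r|r||] /=; lia. Qed.

Lemma sigma_node a : is_node t a -> is_node t (sigma t a).
Proof.
rewrite /is_node; case: t tv => [r|r|r||] /= tv' ha.
- lia.
- lia.
- by repeat case: ifP => ?; lia.
- by move: ha; case: a => [|[|[|[|[|[|[|a]]]]]]].
- by move: ha; case: a => [|[|[|[|[|a]]]]].
Qed.

Lemma fold_node_Isig a : in_Isig t (fold_node t a) = is_node t a.
Proof.
rewrite /is_node /fold_node; case: t tv => [r|r|r||] /= tv'.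
- by case: ifP => ?; lia.
- by case: ifP => ?; lia.
- by case: ifP => ?; lia.
- by case: a => [|[|[|[|[|[|[|a]]]]]]].
- by case: a => [|[|[|[|[|a]]]]].
Qed.

Lemma fold_node_id a : in_Isig t a -> fold_node t a = a.
Proof.
rewrite /fold_node; case: t => [r|r|r||] /= ha.
- by case: ifP => ?; lia.
- by case: ifP => ?; lia.
- by case: ifP => ?; lia.
- by case: a ha => [|[|[|[|[|[|[|a]]]]]]].
- by case: a ha => [|[|[|[|[|a]]]]].
Qed.

Lemma fold_shift0 a : in_Isig t a -> fold_shift t a = 0%N.
Proof.
rewrite /fold_shift; case: t => [r|r|r||] /= ha.
- by case: ifP => ?; lia.
- by case: ifP => ?; lia.
- by case: ifP => ?; lia.
- by case: a ha => [|[|[|[|[|[|[|a]]]]]]].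
- by case: a ha => [|[|[|[|[|a]]]]].
Qed.

Lemma iter_sigma_fold a : is_node t a -> iter (fold_shift t a) (sigma t) (fold_node t a) = a.
Proof.
rewrite /is_node /fold_node /fold_shift; case: t tv => [r|r|r||] /= tv' ha.
- by case: ifP => ? /=; lia.
- by case: ifP => ? /=; lia.
- by case: (a =P r.+1) => [->|] /=; rewrite ?eqxx.
- by case: a ha => [|[|[|[|[|[|[|a]]]]]]].
- by case: a ha => [|[|[|[|[|a]]]]].
Qed.

Lemma neighbours_uniq a : is_node t a -> uniq (neighbours t a).
Proof.
rewrite /is_node; case: t tv => [r|r|r||] /= tv' ha.
- rewrite inE; lia.
- rewrite inE; lia.
- by repeat case: ifP => ? //=; rewrite !inE; lia.
- by case: a ha => [|[|[|[|[|[|[|a]]]]]]].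
- by case: a ha => [|[|[|[|[|a]]]]].
Qed.

Lemma adj_neighbours a b : is_node t a -> is_node t b -> adj t a b = (b \in neighbours t a).
Proof.
rewrite /is_node /adj; case: t tv => [r|r|r||] /= tv' ha hb.
- rewrite !inE; lia.
- rewrite !inE; lia.
- by repeat case: ifP => ?; rewrite !inE; lia.
- by case: a ha => [|[|[|[|[|[|[|a]]]]]]] //= _; case: b hb => [|[|[|[|[|[|[|b]]]]]]].
- by case: a ha => [|[|[|[|[|a]]]]] //= _; case: b hb => [|[|[|[|[|b]]]]].
Qed.

End Combinatorics.

Lemma prod_adj_neighbours t (R : comPzRingType) a (G : nat -> R) :
  tt_valid t -> is_node t a -> (forall b, ~~ is_node t b -> G b = 1) ->
  \prod_(1 <= b < (rankN t).+1 | adj t a b) G b = \prod_(b <- neighbours t a) G b.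
Proof.
move=> tv na G_out; apply: prod_filter_perm.
- exact: iota_uniq.
- exact: neighbours_uniq.
- by move=> b; rewrite mem_index_iota => nb; apply: adj_neighbours.
- move=> b /andP[nb _]; apply: G_out; apply: contra nb.
  by rewrite mem_index_iota ltnS.
Qed.

Ltac sigma_fixed := rewrite /sigma /=; repeat case: ifP => ?; lia.

(* Closes [Phi b w = Phi b' w'] when [b = b'] and [w - w'] is a small multiple of
   [kappa Omega], or of [Omega] if [sigma] fixes [b]. *)
Ltac shift_eq eqK eq_fixed := first
  [ by apply: (eqK _ _ _ _ 0); [lia | ring]
  | by apply: (eqK _ _ _ _ 1); [lia | ring]
  | by apply: (eqK _ _ _ _ (-1)); [lia | ring]
  | by apply: (eq_fixed _ _ _ _ 1); [lia | sigma_fixed | ring]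
  | by apply: (eq_fixed _ _ _ _ (-1)); [lia | sigma_fixed | ring]
  | by apply: (eq_fixed _ _ _ _ 2); [lia | sigma_fixed | ring]
  | by apply: (eq_fixed _ _ _ _ (-2)); [lia | sigma_fixed | ring] ].

Ltac shift_eq_prod eqK eq_fixed := first
  [ shift_eq eqK eq_fixed
  | by congr (_ * _); shift_eq eqK eq_fixed
  | by rewrite [LHS]mulrC; congr (_ * _); shift_eq eqK eq_fixed
  | by rewrite [LHS]mulrA; congr (_ * _ * _); shift_eq eqK eq_fixed ].

Section Folding.
Variables (t : twisted_type) (O : CC) (R : comPzRingType) (Phi : nat -> CC -> R).
Hypothesis tv : tt_valid t.
Hypothesis Phi_perK : forall b w, Phi b (w + (kappa t)%:R * O) = Phi b w.
Hypothesis Phi_per_fixed : forall b w, sigma t b = b -> Phi b (w + O) = Phi b w.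

Lemma Phi_eqK b b' w w' (j : int) :
  b = b' -> w = w' + j%:~R * ((kappa t)%:R * O) -> Phi b w = Phi b' w'.
Proof. by move=> <- ->; rewrite mulrzl (periodic_mulrz (@Phi_perK b)). Qed.

Lemma Phi_eq_fixed b b' w w' (j : int) :
  b = b' -> sigma t b = b -> w = w' + j%:~R * O -> Phi b w = Phi b' w'.
Proof.
by move=> <- fixed_b ->; rewrite mulrzl (periodic_mulrz (fun w => @Phi_per_fixed b w fixed_b)).
Qed.

Definition folded a z := Phi (fold_node t a) (z - (fold_shift t a)%:R * O).

Lemma folded_id a z : in_Isig t a -> folded a z = Phi a z.
Proof. by move=> aI; rewrite /folded fold_node_id ?fold_shift0 // mul0r subr0. Qed.

Lemma folded_sigma a z : is_node t a -> folded a z = folded (sigma t a) (z + O).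
Proof.
rewrite /folded /is_node; move: Phi_eqK Phi_eq_fixed.
case: t tv => [r|r|r||] tv' eqK eq_fixed ha; rewrite /= in tv' ha eqK eq_fixed.
- rewrite /fold_node /fold_shift /=; repeat case: ifP => ?; try (exfalso; lia).
  all: shift_eq eqK eq_fixed.
- rewrite /fold_node /fold_shift /=; repeat case: ifP => ?; try (exfalso; lia).
  all: shift_eq eqK eq_fixed.
- rewrite [sigma _ a]/=; repeat case: ifP => ?; rewrite /fold_node /fold_shift /=.
  all: repeat case: ifP => ?; try (exfalso; lia).
  all: shift_eq eqK eq_fixed.
- rewrite /fold_node /fold_shift.
  by case: a ha => [|[|[|[|[|[|[|a]]]]]]] //= _; shift_eq eqK eq_fixed.
- rewrite /fold_node /fold_shift.
  by case: a ha => [|[|[|[|[|a]]]]] //= _; shift_eq eqK eq_fixed.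
Qed.

Lemma folded_neighbours a z : is_node t a ->
  \prod_(b <- neighbours t a) folded b z =
  twisted_M t O Phi (fold_node t a) (z - (fold_shift t a)%:R * O).
Proof.
rewrite /folded /is_node; move: Phi_eqK Phi_eq_fixed.
case: t tv => [r|r|r||] /= tv' eqK eq_fixed ha;
  rewrite /twisted_M /neighbours /fold_node /fold_shift.
- case: (leqP a r) => ? /=; rewrite !big_cons big_nil mulr1.
  all: repeat case: ifP => ?; try (exfalso; lia).
  all: shift_eq_prod eqK eq_fixed.
- case: (leqP a r) => ? /=; rewrite !big_cons big_nil mulr1.
  all: repeat case: ifP => ?; try (exfalso; lia).
  all: shift_eq_prod eqK eq_fixed.
- case: (a =P r.+1) => [->|?]; rewrite ?eqxx /=.
  all: repeat case: ifP => ?; try (exfalso; lia).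
  all: rewrite ?big_cons ?big_nil ?mulr1 /=.
  all: repeat case: ifP => ?; try (exfalso; lia).
  all: shift_eq_prod eqK eq_fixed.
- case: a ha => [|[|[|[|[|[|[|a]]]]]]] //= _.
  all: rewrite ?big_cons ?big_nil ?mulr1 /=.
  all: shift_eq_prod eqK eq_fixed.
- case: a ha => [|[|[|[|[|a]]]]] //= _.
  all: rewrite ?big_cons ?big_nil ?mulr1 /=.
  all: shift_eq_prod eqK eq_fixed.
Qed.

End Folding.

Section Equivariance.
Variables (t : twisted_type) (O : CC) (R : comPzRingType) (Psi : nat -> CC -> R).
Hypothesis tv : tt_valid t.
Hypothesis Psi_out : forall b w, ~~ is_node t b -> Psi b w = 1.
Hypothesis Psi_sigma : forall a w, is_node t a -> Psi a w = Psi (sigma t a) (w + O).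
Hypothesis Psi_perK : forall b w, Psi b (w + (kappa t)%:R * O) = Psi b w.

Lemma Psi_iter n b w : is_node t b -> Psi b w = Psi (iter n (sigma t) b) (w + n%:R * O).
Proof.
elim: n b w => [|n IH] b w nb; first by rewrite mul0r addr0.
rewrite iterSr Psi_sigma // (IH _ _ (sigma_node tv nb)).
by congr (Psi _ _); rewrite mulrSr; ring.
Qed.

Lemma Psi_fold a w : is_node t a -> folded t O Psi a w = Psi a w.
Proof.
move=> na; rewrite /folded (Psi_iter (fold_shift t a)) ?iter_sigma_fold ?subrK //.
by apply: (Isig_node tv); rewrite fold_node_Isig.
Qed.

Definition Isig_restrict b w := if in_Isig t b then Psi b w else 1.

Lemma twisted_M_restrict a z : in_Isig t a ->
  twisted_M t O Isig_restrict a z = \prod_(b <- neighbours t a) Psi b z.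
Proof.
move=> aI; have restrict_perK b w : Isig_restrict b (w + (kappa t)%:R * O) = Isig_restrict b w.
  by rewrite /Isig_restrict; case: ifP => // _; apply: Psi_perK.
have restrict_per_fixed b w : sigma t b = b -> Isig_restrict b (w + O) = Isig_restrict b w.
  rewrite /Isig_restrict; case: ifP => // bI fixed_b.
  by rewrite [RHS]Psi_sigma ?fixed_b ?Isig_node.
have ->: twisted_M t O Isig_restrict a z =
         twisted_M t O Isig_restrict (fold_node t a) (z - (fold_shift t a)%:R * O).
  by rewrite (fold_node_id tv aI) (fold_shift0 tv aI) mul0r subr0.
rewrite -(folded_neighbours tv restrict_perK restrict_per_fixed) ?Isig_node //.
apply: eq_bigr => b _; rewrite /folded /Isig_restrict fold_node_Isig //.
case: ifP => nb; first exact: Psi_fold.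
by rewrite Psi_out ?nb.
Qed.

End Equivariance.

(** * The isomorphism *)

Section Isomorphism.
Variables (t : twisted_type) (hb : CC).
Hypothesis tv : tt_valid t.

Local Notation O := (Omega t hb).
Local Notation Q := (TXquot t hb).
Local Notation W := (TXtw t hb).

Lemma period_hbar : twopii / hb = (kappa t)%:R * O.
Proof.
have kappa_neq0 : (kappa t)%:R != 0 :> CC by rewrite pnatr_eq0; case: (t).
by rewrite /Omega invfM mulrCA mulVKf.
Qed.

Lemma period_kappa_a b :
  twopii / ((kappa_a t b)%:R * hb) = (if sigma t b == b then 1 else (kappa t)%:R) * O.
Proof. by rewrite /kappa_a; case: ifP => _; rewrite mul1r // period_hbar. Qed.

Lemma Ttw_out b m z : ~~ (in_Isig t b && (0 < m)%N) -> Ttw t hb b m z = 1.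
Proof. by move=> bm; rewrite /Ttw tT_out ?rmorph1. Qed.

Lemma Ttw_gen (g : tgen t hb) :
  rq (trel t hb) (fgen g) = Ttw t hb (tg_a g) (tg_m g) (qrepr (tg_u g)).
Proof. by case: g => b m bm u; rewrite /Ttw (tT_gen _ _ bm) cproj_qrepr. Qed.

Lemma Ttw_per b m w (j : int) :
  Ttw t hb b m (w + j%:~R * (twopii / ((kappa_a t b)%:R * hb))) = Ttw t hb b m w.
Proof.
case bm: (in_Isig t b && (0 < m)%N); last by rewrite !Ttw_out ?bm.
by rewrite /Ttw !(tT_gen _ _ bm) (@cproj_eq _ _ w j) // (addrC w) addrK.
Qed.

Lemma Ttw_perK b m w : Ttw t hb b m (w + (kappa t)%:R * O) = Ttw t hb b m w.
Proof.
have := Ttw_per b m w; rewrite period_kappa_a; case: ifP => _.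
- by move/(_ (kappa t)%:Z); rewrite mul1r.
- by move/(_ 1); rewrite mul1r.
Qed.

Lemma Ttw_per_fixed b m w : sigma t b = b -> Ttw t hb b m (w + O) = Ttw t hb b m w.
Proof.
by move=> fixed_b; have := Ttw_per b m w 1; rewrite period_kappa_a fixed_b eqxx !mul1r.
Qed.

Lemma Ttw_per_hbar b m w (j : int) : Ttw t hb b m (w + j%:~R * (twopii / hb)) = Ttw t hb b m w.
Proof. by rewrite period_hbar mulrzl (periodic_mulrz (@Ttw_perK b m)). Qed.

Lemma Ttw_rel c m w : in_Isig t c -> (0 < m)%N ->
  Ttw t hb c m (w - 1) * Ttw t hb c m (w + 1) =
  Ttw t hb c m.-1 w * Ttw t hb c m.+1 w + twisted_M t O (fun b => Ttw t hb b m) c w.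
Proof.
move=> cI m0; rewrite /Ttw -Mtw_rmorph -!rmorphM -rmorphD.
by apply: rq_eq; exists c, m, w.
Qed.

Lemma fold_gen_subproof a m :
  is_node t a && (0 < m)%N -> in_Isig t (fold_node t a) && (0 < m)%N.
Proof. by rewrite fold_node_Isig. Qed.

Definition fold_gen (g : ugen t hb) : tgen t hb :=
  TGen t hb (fold_node t (ug_a g)) (ug_m g) (fold_gen_subproof (ug_P g))
    (cproj _ (qrepr (ug_u g) - (fold_shift t (ug_a g))%:R * O)).

Lemma fold_genK g :
  rq (trel t hb) (fgen (fold_gen g)) * rq (trel t hb) (fgen_inv (fold_gen g)) = 1.
Proof. by rewrite -rmorphM fgenV rmorph1. Qed.

Definition fold_free : {rmorphism freeRing (ugen t hb) -> W} := free_lift fold_genK.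

Lemma fold_free_gen g :
  fold_free (fgen g) = folded t O (fun b => Ttw t hb b (ug_m g)) (ug_a g) (qrepr (ug_u g)).
Proof.
rewrite free_lift_gen Ttw_gen /=.
by have [j ->] := qrepr_cproj ((kappa_a t (fold_node t (ug_a g)))%:R * hb)
  (qrepr (ug_u g) - (fold_shift t (ug_a g))%:R * O); rewrite Ttw_per.
Qed.

Lemma fold_free_uT a m z : fold_free (uT t hb a m z) = folded t O (fun b => Ttw t hb b m) a z.
Proof.
case am: (is_node t a && (0 < m)%N).
  by rewrite (uT_gen _ _ am) fold_free_gen /=; have [j ->] := qrepr_cproj hb z;
     rewrite /folded addrAC Ttw_per_hbar.
by rewrite uT_out ?am // rmorph1 /folded Ttw_out // (fold_node_Isig tv) am.
Qed.

Lemma fold_free_urel x : urel t hb x -> fold_free x = 0.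
Proof.
case=> a [m [z [na [m0 ->]]]].
rewrite rmorphB rmorphD !rmorphM rmorph_prod !fold_free_uT.
rewrite (eq_bigr _ (fun b _ => fold_free_uT b m z)) prod_adj_neighbours //; last first.
  by move=> b nb; rewrite /folded Ttw_out // (fold_node_Isig tv) (negbTE nb).
rewrite (folded_neighbours tv (@Ttw_perK ^~ m) (@Ttw_per_fixed ^~ m)) // /folded.
by rewrite [z - 1 - _]addrAC [z + 1 - _]addrAC Ttw_rel ?subrr ?(fold_node_Isig tv).
Qed.

Definition fold_TX : {rmorphism TX t hb -> W} := rq_lift fold_free_urel.

Lemma fold_TX_Jsig y : Jsig t hb y -> fold_TX y = 0.
Proof.
case=> a [m [z [na [m0 ->]]]].
rewrite rmorphB /hatT !rq_liftE !fold_free_uT.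
by rewrite (folded_sigma tv (@Ttw_perK ^~ m) (@Ttw_per_fixed ^~ m)) ?subrr.
Qed.

Definition fold_quot : {rmorphism Q -> W} := rq_lift fold_TX_Jsig.

Lemma fold_quot_hatT a m z :
  fold_quot (rq _ (hatT t hb a m z)) = folded t O (fun b => Ttw t hb b m) a z.
Proof. by rewrite !rq_liftE fold_free_uT. Qed.

Definition hatTq b m z : Q := rq (Jsig t hb) (hatT t hb b m z).

Lemma hatTq_out b m z : ~~ (is_node t b && (0 < m)%N) -> hatTq b m z = 1.
Proof. by move=> bm; rewrite /hatTq /hatT uT_out ?rmorph1. Qed.

Lemma hatTq_gen (g : ugen t hb) :
  rq (Jsig t hb) (rq (urel t hb) (fgen g)) = hatTq (ug_a g) (ug_m g) (qrepr (ug_u g)).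
Proof. by case: g => a m am u; rewrite /hatTq /hatT (uT_gen _ _ am) cproj_qrepr. Qed.

Lemma hatTq_per_hbar b m w (j : int) : hatTq b m (w + j%:~R * (twopii / hb)) = hatTq b m w.
Proof.
case bm: (is_node t b && (0 < m)%N); last by rewrite !hatTq_out ?bm.
by rewrite /hatTq /hatT !(uT_gen _ _ bm) (@cproj_eq _ _ w j) // (addrC w) addrK.
Qed.

Lemma hatTq_perK b m w : hatTq b m (w + (kappa t)%:R * O) = hatTq b m w.
Proof. by have := hatTq_per_hbar b m w 1; rewrite period_hbar mul1r. Qed.

Lemma hatTq_sigma a m w : is_node t a -> hatTq a m w = hatTq (sigma t a) m (w + O).
Proof.
move=> na; case: (posnP m) => [->|m0]; first by rewrite !hatTq_out ?andbF.
by apply: rq_eq; exists a, m, w.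
Qed.

Lemma hatTq_per_kappa_a b m w (j : int) : is_node t b ->
  hatTq b m (w + j%:~R * (twopii / ((kappa_a t b)%:R * hb))) = hatTq b m w.
Proof.
move=> nb; rewrite period_kappa_a; case: ifP => [/eqP fixed_b|_].
  rewrite mul1r mulrzl (periodic_mulrz (F := hatTq b m)) // => w'.
  by rewrite [RHS]hatTq_sigma // fixed_b.
by rewrite mulrzl (periodic_mulrz (@hatTq_perK b m)).
Qed.

Lemma hatTq_rel a m z : is_node t a -> (0 < m)%N ->
  hatTq a m (z - 1) * hatTq a m (z + 1) =
  hatTq a m.-1 z * hatTq a m.+1 z + \prod_(1 <= b < (rankN t).+1 | adj t a b) hatTq b m z.
Proof.
move=> na m0; rewrite /hatTq /hatT -!rmorphM -!rmorph_prod -!rmorphD; congr (rq _ _).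
by apply: rq_eq; exists a, m, z.
Qed.

Lemma unfold_gen_subproof b m :
  in_Isig t b && (0 < m)%N -> is_node t b && (0 < m)%N.
Proof. by case/andP=> /(Isig_node tv) -> ->. Qed.

Definition unfold_gen (g : tgen t hb) : ugen t hb :=
  UGen t hb (tg_a g) (tg_m g) (unfold_gen_subproof (tg_P g)) (cproj hb (qrepr (tg_u g))).

Lemma unfold_genK g :
  rq (Jsig t hb) (rq (urel t hb) (fgen (unfold_gen g))) *
  rq (Jsig t hb) (rq (urel t hb) (fgen_inv (unfold_gen g))) = 1.
Proof. by rewrite -!rmorphM fgenV !rmorph1. Qed.

Definition unfold_free : {rmorphism freeRing (tgen t hb) -> Q} := free_lift unfold_genK.

Lemma unfold_free_gen g : unfold_free (fgen g) = hatTq (tg_a g) (tg_m g) (qrepr (tg_u g)).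
Proof.
rewrite free_lift_gen hatTq_gen /=.
by have [j ->] := qrepr_cproj hb (qrepr (tg_u g)); rewrite hatTq_per_hbar.
Qed.

Lemma unfold_free_tT b m z :
  unfold_free (tT t hb b m z) = Isig_restrict t (fun b => hatTq b m) b z.
Proof.
rewrite /Isig_restrict; case: ifP => bI; last by rewrite tT_out ?bI // rmorph1.
case: (posnP m) => [->|m0]; first by rewrite tT_out ?andbF // rmorph1 hatTq_out ?andbF.
have bm : in_Isig t b && (0 < m)%N by rewrite bI m0.
rewrite (tT_gen _ _ bm) unfold_free_gen /=.
have [j ->] := qrepr_cproj ((kappa_a t b)%:R * hb) z.
by rewrite hatTq_per_kappa_a ?(Isig_node tv).
Qed.

Lemma unfold_free_trel x : trel t hb x -> unfold_free x = 0.
Proof.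
case=> a [m [z [aI [m0 ->]]]].
rewrite rmorphB rmorphD !rmorphM Mtw_rmorph !unfold_free_tT.
have -> : (fun b w => unfold_free (tT t hb b m w)) = Isig_restrict t (fun b => hatTq b m).
  by apply/funext => b; apply/funext => w; rewrite unfold_free_tT.
have hatTq_out' b w : ~~ is_node t b -> hatTq b m w = 1.
  by move=> nb; rewrite hatTq_out // (negbTE nb).
rewrite (twisted_M_restrict tv hatTq_out' (@hatTq_sigma ^~ m) (@hatTq_perK ^~ m)) //.
rewrite /Isig_restrict aI.
have na := Isig_node tv aI.
by rewrite hatTq_rel // (prod_adj_neighbours tv na (fun b => hatTq_out' b z)) subrr.
Qed.

Definition unfold_quot : {rmorphism W -> Q} := rq_lift unfold_free_trel.

Lemma unfold_fold q : unfold_quot (fold_quot q) = q.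
Proof.
elim/rq_ind: q => x; elim/rq_ind: x => x.
suff: unfold_quot \o fold_quot \o rq _ \o rq _ =1 rq (Jsig t hb) \o rq (urel t hb) by apply.
apply: free_rmorph_eq => g.
change (unfold_quot (fold_quot (rq _ (rq _ (fgen g)))) = rq _ (rq _ (fgen g))).
rewrite !rq_liftE free_lift_gen rq_liftE unfold_free_gen hatTq_gen /=.
have [j ->] := qrepr_cproj ((kappa_a t (fold_node t (ug_a g)))%:R * hb)
  (qrepr (ug_u g) - (fold_shift t (ug_a g))%:R * O).
have [na _] := andP (ug_P g).
rewrite hatTq_per_kappa_a; first exact: (Psi_fold tv (@hatTq_sigma ^~ (ug_m g))).
by apply: (Isig_node tv); rewrite (fold_node_Isig tv).
Qed.

Lemma fold_unfold w : fold_quot (unfold_quot w) = w.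
Proof.
elim/rq_ind: w => x.
suff: fold_quot \o unfold_quot \o rq _ =1 rq (trel t hb) by apply.
apply: free_rmorph_eq => g.
change (fold_quot (unfold_quot (rq _ (fgen g))) = rq _ (fgen g)).
rewrite rq_liftE unfold_free_gen /hatTq !rq_liftE fold_free_uT Ttw_gen folded_id //.
by case/andP: (tg_P g).
Qed.

End Isomorphism.

Theorem proposition9p5 (t : twisted_type) (hb : CC) :
  tt_valid t ->
  (forall q : rat, hb <> ratr q * twopii) ->
  exists f : {rmorphism TXquot t hb -> TXtw t hb},
    bijective f /\
    forall (a m : nat) (z : CC), in_Isig t a -> (0 < m)%N ->
      f (@rq _ (Jsig t hb) (hatT t hb a m z)) = Ttw t hb a m z.
Proof.
move=> tv _; exists (fold_quot hb tv); split.
  by exists (unfold_quot hb tv); [exact: unfold_fold | exact: fold_unfold].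
by move=> a m z aI _; rewrite fold_quot_hatT folded_id.
Qed.
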